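(* Let $\Psi$ be a declarative context and $A$ a type with $\Psi \vdash A\ \mathsf{type}$. Then for each polarity $\pm \in \{+,-\}$ we have $\Psi \vdash A \le^{\pm} A$.
   Context: Sorts are $\kappa \in \{\mathsf{type}, \mathbb{N}\}$. Index terms/monotypes $\tau, t$ are built from $\mathbf{1}$, universal variables $\alpha$, binary connectives $\tau_1 \oplus \tau_2$ with $\oplus \in \{\to, +, \times\}$ (all of sort $\mathsf{type}$), and $\mathsf{zero}$, $\mathsf{succ}(t)$ (of sort $\mathbb{N}$); $\Psi \vdash t : \kappa$ means $t$ has sort $\kappa$ with its variables declared in $\Psi$ at the appropriate sorts. Types are $A, B, C ::= \mathbf{1} \mid \alpha \mid A \oplus B \mid \forall \alpha{:}\kappa.\,A \mid \exists \alpha{:}\kappa.\,A \mid P \supset A \mid A \wedge P \mid \mathsf{Vec}\ t\ A$, where propositions are $P ::= t = t'$ (indices of sort $\mathbb{N}$). A declarative context $\Psi$ is a list of declarations including universal variables $\alpha : \kappa$; $\Psi \vdash A\ \mathsf{type}$ means all free variables of $A$ are declared in $\Psi$ at the appropriate sorts. A type is positive if its head connective is $\exists$, negative if its head connective is $\forall$; ''nonpos'' means not positive and ''nonneg'' means not negative. Declarative subtyping $\Psi \vdash A \le^{\pm} B$ (polarity $+$ or $-$) is inductively defined by: (Refl) if $\Psi \vdash A\ \mathsf{type}$ and $A$ is nonpos and nonneg then $\Psi \vdash A \le^{\pm} A$ for either polarity; ($\forall$L) if $\Psi \vdash \tau : \kappa$ and $\Psi \vdash [\tau/\alpha]A \le^-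 B$ then $\Psi \vdash \forall\alpha{:}\kappa.A \le^- B$; ($\forall$R) if $\Psi, \beta{:}\kappa \vdash A \le^- B$ then $\Psi \vdash A \le^- \forall\beta{:}\kappa.B$; ($\exists$L) if $\Psi, \alpha{:}\kappa \vdash A \le^+ B$ then $\Psi \vdash \exists\alpha{:}\kappa.A \le^+ B$; ($\exists$R) if $\Psi \vdash \tau:\kappa$ and $\Psi \vdash A \le^+ [\tau/\beta]B$ then $\Psi \vdash A \le^+ \exists\beta{:}\kappa.B$; ($-{+}$) if $\Psi \vdash A \le^- B$ with $A$, $B$ both nonpos then $\Psi \vdash A \le^+ B$; ($+{-}$) if $\Psi \vdash A \le^+ B$ with $A$, $B$ both nonneg then $\Psi \vdash A \le^- B$. *)

From Stdlib Require Import Arith List.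
Import ListNotations.

Inductive sort : Type := SType | SNat.

Inductive binop : Type := OArrow | OSum | OProd.

(* One syntax for index terms/monotypes and types.  Type variables are
   de Bruijn indices: TVar 0 is the most recently declared universal
   variable.  A proposition P ::= t = t' is stored inline:
     TImp t t' A   is   (t = t') \supset A
     TWith A t t'  is   A /\ (t = t')                                    *)
Inductive ty : Type :=
  | TUnit : ty
  | TVar  : nat -> ty
  | TBin  : binop -> ty -> ty -> ty
  | TAll  : sort -> ty -> ty
  | TEx   : sort -> ty -> ty
  | TImp  : ty -> ty -> ty -> ty
  | TWith : ty -> ty -> ty -> ty
  | TVec  : ty -> ty -> ty
  | TZero : ty
  | TSucc : ty -> ty.

Fixpoint shift (c : nat) (A : ty) : ty :=
  match A with
  | TUnit => TUnit
  | TVar n => if c <=? n then TVar (S n) else TVar n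
  | TBin o A1 A2 => TBin o (shift c A1) (shift c A2)
  | TAll k B => TAll k (shift (S c) B)
  | TEx k B => TEx k (shift (S c) B)
  | TImp t1 t2 B => TImp (shift c t1) (shift c t2) (shift c B)
  | TWith B t1 t2 => TWith (shift c B) (shift c t1) (shift c t2)
  | TVec t B => TVec (shift c t) (shift c B)
  | TZero => TZero
  | TSucc t => TSucc (shift c t)
  end.

(* subst c s A : replace variable c by s (s lives in the context with c
   removed, already shifted to depth c), decrementing variables above c *)
Fixpoint subst (c : nat) (s : ty) (A : ty) : ty :=
  match A with
  | TUnit => TUnit
  | TVar n => if n =? c then s else if c <? n then TVar (pred n) else TVar n
  | TBin o A1 A2 => TBin o (subst c s A1) (subst c s A2)
  | TAll k B => TAll k (subst (S c) (shift 0 s) B)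
  | TEx k B => TEx k (subst (S c) (shift 0 s) B)
  | TImp t1 t2 B => TImp (subst c s t1) (subst c s t2) (subst c s B)
  | TWith B t1 t2 => TWith (subst c s B) (subst c s t1) (subst c s t2)
  | TVec t B => TVec (subst c s t) (subst c s B)
  | TZero => TZero
  | TSucc t => TSucc (subst c s t)
  end.

Definition subst0 (tau A : ty) : ty := subst 0 tau A.

(* Declarative contexts: universal variables alpha:kappa, and program
   variables x : A (which do not bind type variables).  Head = most recent. *)
Inductive decl : Type :=
  | DUniv : sort -> decl
  | DProg : nat -> ty -> decl.

Definition ctx := list decl.

Fixpoint usort (G : ctx) (n : nat) : option sort :=
  match G with
  | [] => None
  | DUniv k :: G' => match n with 0 => Some k | S n' => usort G' n' end
  | DProg _ _ :: G' => usort G' n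
  end.

Inductive has_sort (G : ctx) : ty -> sort -> Prop :=
  | SoUnit : has_sort G TUnit SType
  | SoVar  : forall n k, usort G n = Some k -> has_sort G (TVar n) k
  | SoBin  : forall o t1 t2, has_sort G t1 SType -> has_sort G t2 SType ->
             has_sort G (TBin o t1 t2) SType
  | SoZero : has_sort G TZero SNat
  | SoSucc : forall t, has_sort G t SNat -> has_sort G (TSucc t) SNat.

Inductive wf_type (G : ctx) : ty -> Prop :=
  | WfUnit : wf_type G TUnit
  | WfVar  : forall n, usort G n = Some SType -> wf_type G (TVar n)
  | WfBin  : forall o A B, wf_type G A -> wf_type G B -> wf_type G (TBin o A B)
  | WfAll  : forall k A, wf_type (DUniv k :: G) A -> wf_type G (TAll k A)
  | WfEx   : forall k A, wf_type (DUniv k :: G) A -> wf_type G (TEx k A)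
  | WfImp  : forall t1 t2 A, has_sort G t1 SNat -> has_sort G t2 SNat ->
             wf_type G A -> wf_type G (TImp t1 t2 A)
  | WfWith : forall A t1 t2, wf_type G A -> has_sort G t1 SNat ->
             has_sort G t2 SNat -> wf_type G (TWith A t1 t2)
  | WfVec  : forall t A, has_sort G t SNat -> wf_type G A -> wf_type G (TVec t A).

Definition positive (A : ty) : Prop :=
  match A with TEx _ _ => True | _ => False end.
Definition negative (A : ty) : Prop :=
  match A with TAll _ _ => True | _ => False end.
Definition nonpos (A : ty) : Prop := ~ positive A.
Definition nonneg (A : ty) : Prop := ~ negative A.

Inductive polarity : Type := Pos | Neg.

Inductive sub : ctx -> polarity -> ty -> ty -> Prop :=
  | SubRefl : forall G p A, wf_type G A -> nonpos A -> nonneg A -> sub G p A A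
  | SubAllL : forall G k tau A B, has_sort G tau k -> sub G Neg (subst0 tau A) B ->
              sub G Neg (TAll k A) B
  | SubAllR : forall G k A B, sub (DUniv k :: G) Neg (shift 0 A) B ->
              sub G Neg A (TAll k B)
  | SubExL  : forall G k A B, sub (DUniv k :: G) Pos A (shift 0 B) ->
              sub G Pos (TEx k A) B
  | SubExR  : forall G k tau A B, has_sort G tau k -> sub G Pos A (subst0 tau B) ->
              sub G Pos A (TEx k B)
  | SubNegPos : forall G A B, sub G Neg A B -> nonpos A -> nonpos B -> sub G Pos A B
  | SubPosNeg : forall G A B, sub G Pos A B -> nonneg A -> nonneg B -> sub G Neg A B.

From Stdlib Require Import Arith List Lia.

(* For [forall a:k. A] the rule
   forall-R introduces a fresh variable b, and forall-L then instantiates a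
   with b itself, which turns the weakened [A] back into [A]; existentials are
   dual.  The other polarity then follows from the polarity-switching rules,
   as a universal type is nonpositive and an existential one nonnegative. *)

Lemma subst_var_shift (B : ty) (c : nat) : subst c (TVar c) (shift (S c) B) = B.
Proof.
  revert c; induction B; intros c; try (simpl; congruence).
  cbn [shift]; destruct (S c <=? n) eqn:Hle; cbn [subst].
  - apply Nat.leb_le in Hle.
    replace (S n =? c) with false by (symmetry; apply Nat.eqb_neq; lia).
    replace (c <? S n) with true by (symmetry; apply Nat.ltb_lt; lia).
    reflexivity.
  - apply Nat.leb_gt in Hle.
    destruct (Nat.eq_dec n c) as [-> | Hne].
    + now rewrite Nat.eqb_refl.
    + replace (n =? c) with false by (symmetry; apply Nat.eqb_neq; lia).
      replace (c <? n) with false by (symmetry; apply Nat.ltb_ge; lia).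
      reflexivity.
Qed.

Lemma subst0_var_shift (B : ty) : subst0 (TVar 0) (shift 1 B) = B.
Proof. exact (subst_var_shift B 0). Qed.

Lemma sub_all_refl (G : ctx) (k : sort) (A : ty) :
  sub (DUniv k :: G) Neg A A -> sub G Neg (TAll k A) (TAll k A).
Proof.
  intros HA. apply SubAllR, SubAllL with (tau := TVar 0).
  - now constructor.
  - now rewrite subst0_var_shift.
Qed.

Lemma sub_ex_refl (G : ctx) (k : sort) (A : ty) :
  sub (DUniv k :: G) Pos A A -> sub G Pos (TEx k A) (TEx k A).
Proof.
  intros HA. apply SubExL, SubExR with (tau := TVar 0).
  - now constructor.
  - now rewrite subst0_var_shift.
Qed.

Theorem mainTheorem1 : forall (G : ctx) (A : ty),
  wf_type G A -> forall p : polarity, sub G p A A.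
Proof.
  intros G A HA; induction HA; intros p;
    try (apply SubRefl; [now constructor | easy | easy]).
  - assert (HNeg : sub G Neg (TAll k A) (TAll k A)) by now apply sub_all_refl.
    destruct p; [now apply SubNegPos | exact HNeg].
  - assert (HPos : sub G Pos (TEx k A) (TEx k A)) by now apply sub_ex_refl.
    destruct p; [exact HPos | now apply SubPosNeg].
Qed.
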